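(* Let $A = A_s + A_i\epsilon\in\mathbb{DR}^{m\times n}$ with $m\ge n$ and $A_s$ of full column rank. Let $A_s = Q_sR_s$ be the thin QR decomposition of $A_s$, with $Q_s\in\mathbb{R}^{m\times n}$ having orthonormal columns and $R_s=(r_{s_{ij}})\in\mathbb{R}^{n\times n}$ upper triangular with positive diagonal entries. Put $B = Q_s^{\top}A_i = [b_1,\dots,b_n]$ ($b_j\in\mathbb{R}^n$). Define $P = [p_1,\dots,p_n]\in\mathbb{R}^{n\times n}$ with zero diagonal, strictly lower triangular part given by $$p_1(2{:}n) = b_1(2{:}n)/r_{s_{11}},\qquad p_k(k{+}1{:}n) = \Big(b_k(k{+}1{:}n) - \sum_{t=1}^{k-1} r_{s_{tk}}\,p_t(k{+}1{:}n)\Big)\Big/r_{s_{kk}},\quad k=2,\dots,n-1,$$ and $P^{\top} = -P$. Set $$Q_i = (I_m - Q_sQ_s^{\top})A_iR_s^{-1} + Q_sP,\qquad R_i = Q_s^{\top}A_i - PR_s.$$ Then $Q = Q_s+Q_i\epsilon\in\mathbb{DR}^{m\times n}$ is a dual matrix with orthonormal columns ($Q^{\top}Q = I_n$), $R = R_s + R_i\epsilon\in\mathbb{DR}^{n\times n}$ is an upper triangular dual matrix, and $A = QR$. Moreover, in any such thin QR decomposition $A=QR$ with standard parts $Q_s,R_s$, the infinitesimal parts have the form $Q_i = (I_m - Q_sQ_s^{\top})A_iR_s^{-1} + Q_sP$, $R_i = Q_s^{\top}A_i - PR_s$ for some skew-symmetric $P\in\mathbb{R}^{n\times n}$.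
   Context: A dual number is $a = a_s + a_i\epsilon$ with $a_s,a_i\in\mathbb{R}$, where $\epsilon^2=0$, $\epsilon\neq 0$; $\mathbb{DR}^{m\times n}$ denotes the set of dual matrices $A = A_s + A_i\epsilon$ with $A_s, A_i\in\mathbb{R}^{m\times n}$. Products use $\epsilon^2=0$: $(A_s+A_i\epsilon)(B_s+B_i\epsilon) = A_sB_s + (A_sB_i + A_iB_s)\epsilon$. The transpose is $A^{\top}=A_s^{\top}+A_i^{\top}\epsilon$. A dual matrix $Q\in\mathbb{DR}^{m\times n}$ has orthonormal columns if $Q^{\top}Q=I_n$ (equivalently $Q_s^{\top}Q_s=I_n$ and $Q_s^{\top}Q_i+Q_i^{\top}Q_s=O_n$). A dual matrix is upper triangular if both parts are upper triangular. For a vector $v$, $v(a{:}b)$ is the subvector of entries $a$ through $b$. *)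

From HB Require Import structures.
From mathcomp Require Import all_boot all_order all_algebra.
Set Implicit Arguments. Unset Strict Implicit. Unset Printing Implicit Defensive.
Import Order.TTheory GRing.Theory Num.Theory.
Local Open Scope ring_scope.

(* Dual matrices A = A_s + A_i eps, eps^2 = 0 *)
Record dmx (R : Type) (m n : nat) := DMx { dsp : 'M[R]_(m, n); dip : 'M[R]_(m, n) }.
Arguments DMx {R m n}.
Arguments dsp {R m n}.
Arguments dip {R m n}.

Section Dual.
Variable R : pzRingType.

(* (As + Ai e)(Bs + Bi e) = AsBs + (AsBi + AiBs) e *)
Definition dmul m n p (A : dmx R m n) (B : dmx R n p) : dmx R m p :=
  DMx (dsp A *m dsp B) (dsp A *m dip B + dip A *m dsp B).

Definition dtr m n (A : dmx R m n) : dmx R n m := DMx (dsp A)^T (dip A)^T.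

Definition dId n : dmx R n n := DMx 1%:M 0.

Definition dorthonormal m n (Q : dmx R m n) : Prop := dmul (dtr Q) Q = dId n.

Definition upper_mx n (A : 'M[R]_n) : Prop := forall i j : 'I_n, (j < i)%N -> A i j = 0.

Definition dupper n (A : dmx R n n) : Prop := upper_mx (dsp A) /\ upper_mx (dip A).
End Dual.

Section PDef.
Variable R : fieldType.
Variable n : nat.

(* entry access with natural-number (0-based) indices; 0 out of range *)
Definition mxe (A : 'M[R]_n) (i j : nat) : R :=
  match (insub i : option 'I_n), (insub j : option 'I_n) with
  | Some i', Some j' => A i' j'
  | _, _ => 0
  end.

(* columns p_0, ..., p_{k-1} (0-based) of the strictly lower part of P,
   as functions of the (0-based) row index:
   p_k(i) = (b_k(i) - sum_{t<k} r_{tk} p_t(i)) / r_{kk}   for i > k *)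
Fixpoint Pcols (Rs B : 'M[R]_n) (k : nat) : seq (nat -> R) :=
  match k with
  | 0 => [::]
  | k'.+1 =>
      let c := Pcols Rs B k' in
      rcons c (fun i => (mxe B i k'
                         - \sum_(t < k') mxe Rs t k' * nth (fun _ => 0) c t i)
                        / mxe Rs k' k')
  end.

Definition Pmx (Rs B : 'M[R]_n) : 'M[R]_n :=
  \matrix_(i < n, j < n)
    if (j < i)%N then nth (fun _ => 0) (Pcols Rs B n) j i
    else if (i < j)%N then - nth (fun _ => 0) (Pcols Rs B n) i j
    else 0.
End PDef.

(* Dual orthonormality of Q = Qs + Qi eps says exactly that Qs^T Qs = I and
   that Qs^T Qi is skew-symmetric, and A = QR says Ai = Qs Ri + Qi Rs.
   Projecting the latter onto the column space of Qs and onto its orthogonal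
   complement shows that every solution has Qi and Ri of the stated form with
   P = Qs^T Qi, and conversely that these formulas give a decomposition for
   every skew-symmetric P.  Upper triangularity of Ri = B - P Rs then only
   constrains the strictly lower part of P, column by column, which is the
   forward substitution defining P. *)

From HB Require Import structures.
From mathcomp Require Import all_boot all_order all_algebra.
Import Order.TTheory GRing.Theory Num.Theory.
Local Open Scope ring_scope.

Section SkewFactor.
Variables (R : fieldType) (n : nat).
Implicit Types Rs B : 'M[R]_n.

Lemma mxeE (A : 'M[R]_n) (i j : 'I_n) : mxe A i j = A i j.
Proof. by rewrite /mxe !valK. Qed.

Lemma size_Pcols Rs B k : size (Pcols Rs B k) = k.
Proof. by elim: k => //= k IH; rewrite size_rcons IH. Qed.

Lemma nth_Pcols Rs B k j : (j < k)%N ->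
  nth (fun _ => 0) (Pcols Rs B k) j = nth (fun _ => 0) (Pcols Rs B j.+1) j.
Proof.
elim: k => // k IH; rewrite ltnS leq_eqVlt => /orP [/eqP -> // | ltjk].
by rewrite /= nth_rcons size_Pcols ltjk IH.
Qed.

Lemma Pcols_rec Rs B k i : (k < n)%N ->
  nth (fun _ => 0) (Pcols Rs B n) k i =
  (mxe B i k - \sum_(t < k) mxe Rs t k * nth (fun _ => 0) (Pcols Rs B n) t i)
    / mxe Rs k k.
Proof.
move=> lt_kn; rewrite nth_Pcols //= nth_rcons size_Pcols ltnn eqxx.
congr ((_ - _) / _); apply: eq_bigr => t _; congr (_ * _).
rewrite nth_Pcols ?ltn_ord // [in RHS]nth_Pcols //.
exact: ltn_trans (ltn_ord t) lt_kn.
Qed.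

Lemma Pmx_skew Rs B : (Pmx Rs B)^T = - Pmx Rs B.
Proof.
apply/matrixP => i j; rewrite !mxE.
by case: (ltngtP i j) => //; rewrite ?opprK ?oppr0.
Qed.

Lemma upper_mx_unit Rs :
  upper_mx Rs -> (forall i, Rs i i != 0) -> Rs \in unitmx.
Proof.
move=> Rs_up Rs_diag; rewrite unitmxE -det_tr det_trig.
  by rewrite unitfE; apply/prodf_neq0 => i _; rewrite mxE.
by apply/is_trig_mxP => i j lt_ij; rewrite mxE Rs_up.
Qed.

Lemma mul_Pmx_lower Rs B :
  upper_mx Rs -> (forall i, Rs i i != 0) ->
  forall i k : 'I_n, (k < i)%N -> (Pmx Rs B *m Rs) i k = B i k.
Proof.
move=> Rs_up Rs_diag i k lt_ki.
set c := fun t => nth (fun _ => 0) (Pcols Rs B n) t.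
set G := fun t : nat => mxe Rs t k * c t i.
(* Rs being upper, only the columns t <= k < i of P contribute, and there
   P i t = c t i; the recursion for c k is then the identity sought. *)
have -> : (Pmx Rs B *m Rs) i k = \sum_(0 <= t < k.+1) G t.
  rewrite mxE (big_nat_widen 0 k.+1 n xpredT G (ltn_ord k)) big_mkord /=.
  rewrite [RHS]big_mkcond /=; apply: eq_bigr => t _; rewrite /G /c mxE mxeE.
  case: (ltnP t k.+1) => [le_tk | lt_kt]; last by rewrite Rs_up ?mulr0.
  by rewrite (leq_ltn_trans _ lt_ki) 1?mulrC // -ltnS.
rewrite big_mkord big_ord_recr /= {2}/G /c Pcols_rec // -/c.
by rewrite [mxe Rs k k * _]mulrC divfK ?mxeE // addrC subrK.
Qed.

Lemma upper_mx_sub_Pmx Rs B :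
  upper_mx Rs -> (forall i, Rs i i != 0) -> upper_mx (B - Pmx Rs B *m Rs).
Proof.
move=> Rs_up Rs_diag i k lt_ki.
by rewrite mxE [X in _ + X]mxE mul_Pmx_lower // subrr.
Qed.

End SkewFactor.

Section DualThinQR.
Variables (R : fieldType) (m n : nat).
Variables (Ai Qs : 'M[R]_(m, n)) (Rs : 'M[R]_n).
Hypothesis Qs_orth : Qs^T *m Qs = 1%:M.
Hypothesis Rs_unit : Rs \in unitmx.

Lemma dorthonormalP (Qi : 'M[R]_(m, n)) :
  dorthonormal (DMx Qs Qi) <-> (Qs^T *m Qi)^T = - (Qs^T *m Qi).
Proof.
rewrite /dorthonormal /dmul /dtr /dId /= Qs_orth trmx_mul trmxK.
split=> [[] | skew]; last by rewrite skew addrN.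
by move/eqP; rewrite addrC addr_eq0 => /eqP.
Qed.

Lemma trmx_mul_proj : Qs^T *m (1%:M - Qs *m Qs^T) = 0.
Proof. by rewrite mulmxBr mulmx1 mulmxA Qs_orth mul1mx subrr. Qed.

Lemma proj_mul : (1%:M - Qs *m Qs^T) *m Qs = 0.
Proof. by rewrite mulmxBl mul1mx -mulmxA Qs_orth mulmx1 subrr. Qed.

Lemma trmx_mul_dqr_inf (P : 'M[R]_n) :
  Qs^T *m ((1%:M - Qs *m Qs^T) *m Ai *m invmx Rs + Qs *m P) = P.
Proof. by rewrite mulmxDr !mulmxA trmx_mul_proj Qs_orth !mul0mx mul1mx add0r. Qed.

Lemma dorthonormal_dqr (P : 'M[R]_n) : P^T = - P ->
  dorthonormal (DMx Qs ((1%:M - Qs *m Qs^T) *m Ai *m invmx Rs + Qs *m P)).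
Proof. by move=> P_skew; apply/dorthonormalP; rewrite trmx_mul_dqr_inf. Qed.

Lemma dmul_dqr (P : 'M[R]_n) :
  dmul (DMx Qs ((1%:M - Qs *m Qs^T) *m Ai *m invmx Rs + Qs *m P))
       (DMx Rs (Qs^T *m Ai - P *m Rs)) = DMx (Qs *m Rs) Ai.
Proof.
rewrite /dmul /=; congr DMx.
rewrite mulmxDl -!mulmxA mulVmx // mulmx1 mulmxBl mul1mx mulmxBr !mulmxA.
by rewrite addrCA !subrK.
Qed.

Lemma dqr_inf_form (Qi : 'M[R]_(m, n)) (Ri : 'M[R]_n) :
  dorthonormal (DMx Qs Qi) -> Ai = Qs *m Ri + Qi *m Rs ->
  [/\ (Qs^T *m Qi)^T = - (Qs^T *m Qi),
      Qi = (1%:M - Qs *m Qs^T) *m Ai *m invmx Rs + Qs *m (Qs^T *m Qi)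
    & Ri = Qs^T *m Ai - (Qs^T *m Qi) *m Rs].
Proof.
move=> /dorthonormalP P_skew def_Ai; split=> //.
  have proj_Ai : (1%:M - Qs *m Qs^T) *m Ai = (Qi - Qs *m (Qs^T *m Qi)) *m Rs.
    rewrite def_Ai mulmxDr [_ *m (Qs *m Ri)]mulmxA proj_mul mul0mx add0r.
    by rewrite !mulmxBl mul1mx !mulmxA.
  by rewrite proj_Ai -mulmxA mulmxV // mulmx1 subrK.
by rewrite def_Ai mulmxDr !mulmxA Qs_orth mul1mx addrK.
Qed.

End DualThinQR.

Arguments dqr_inf_form {R m n Ai Qs Rs} Qs_orth Rs_unit {Qi Ri}.

Theorem theorem3p2 (R : realFieldType) (m n : nat)
    (As Ai Qs : 'M[R]_(m, n)) (Rs : 'M[R]_n) :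
  (n <= m)%N ->
  \rank As = n ->
  Qs^T *m Qs = 1%:M ->
  upper_mx Rs ->
  (forall i : 'I_n, 0 < Rs i i) ->
  As = Qs *m Rs ->
  let B := Qs^T *m Ai in
  let P := Pmx Rs B in
  let Qi := (1%:M - Qs *m Qs^T) *m Ai *m invmx Rs + Qs *m P in
  let Ri := Qs^T *m Ai - P *m Rs in
  [/\ dorthonormal (DMx Qs Qi),
      dupper (DMx Rs Ri),
      DMx As Ai = dmul (DMx Qs Qi) (DMx Rs Ri)
    & forall (Q : dmx R m n) (Rd : dmx R n n),
        dorthonormal Q -> dupper Rd -> DMx As Ai = dmul Q Rd ->
        dsp Q = Qs -> dsp Rd = Rs ->
        exists P' : 'M[R]_n,
          P'^T = - P' /\
          dip Q = (1%:M - Qs *m Qs^T) *m Ai *m invmx Rs + Qs *m P' /\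
          dip Rd = Qs^T *m Ai - P' *m Rs].
Proof.
move=> _ _ Qs_orth Rs_up Rs_pos -> B P Qi Ri.
have Rs_diag i : Rs i i != 0 by rewrite lt0r_neq0.
have Rs_unit : Rs \in unitmx by apply: upper_mx_unit.
split.
- exact/dorthonormal_dqr/Pmx_skew.
- by split=> //=; apply: upper_mx_sub_Pmx.
- by rewrite dmul_dqr.
- case=> [Qs' Qi'] [Rs' Ri'] Q_orth _ + /= eQs eRs; subst Qs' Rs'.
  rewrite /dmul /= => -[def_Ai].
  have [P'_skew def_Qi def_Ri] := dqr_inf_form Qs_orth Rs_unit Q_orth def_Ai.
  by exists (Qs^T *m Qi'); split; last split.
Qed.
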